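(* Let $h\in R$ and let $x$ be the binary representation of $h$, and suppose $x\ne 1001000$. Then every occurrence of $1000$ as a contiguous substring of $x$ starts at the first position of $x$ (i.e. $1000$ can occur in $x$ only as a prefix).
   Context: Stern's sequence $(a(n))_{n\ge0}$: $a(0)=0$, $a(1)=1$, $a(2n)=a(n)$, $a(2n+1)=a(n)+a(n+1)$; $s(n)=a(n+1)$ for $n\ge0$. $R$ is the set of record-setters of $s$, i.e. indices $v\ge0$ with $s(i)<s(v)$ for all $i<v$. The binary representation of a positive integer has no leading zeros; $0$ is represented by the string $0$. *)

From mathcomp Require Import all_boot.
Set Implicit Arguments. Unset Strict Implicit. Unset Printing Implicit Defensive.

(* Stern's sequence via fuel: for n >= 2 both recursive arguments n./2 and
   n./2.+1 are < n, so fuel n suffices. *)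
Fixpoint stern_fuel (k n : nat) : nat :=
  match k with
  | 0 => n
  | k'.+1 =>
      if n <= 1 then n
      else if odd n then stern_fuel k' n./2 + stern_fuel k' n./2.+1
      else stern_fuel k' n./2
  end.

Definition stern (n : nat) : nat := stern_fuel n n.

Definition stern_s (n : nat) : nat := stern n.+1.

Definition record_setter (v : nat) : Prop := forall i, i < v -> stern_s i < stern_s v.

(* binary digits, most significant first (true = 1) *)
Fixpoint bin_fuel (k n : nat) : seq bool :=
  match k with
  | 0 => [::]
  | k'.+1 => if n is 0 then [::] else rcons (bin_fuel k' n./2) (odd n)
  end.

Definition binrep (n : nat) : seq bool :=
  if n == 0 then [:: false] else bin_fuel n n.

(* w occurs in x starting at (0-based) position i *)
Definition occurs_at (w x : seq bool) (i : nat) : bool :=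
  (i + size w <= size x) && (take (size w) (drop i x) == w).

(* Reading the bits of x from the left and mapping (p, q) to (p, p + q) on a 0
   and to (p + q, q) on a 1 takes (0, 1) to (a(n), a(n + 1)), where n is the
   value of x; the map is linear in the starting pair.  So if x = w ++ b ++ z
   is the binary expansion of a record-setter h, no string b' of the length of
   b that is lexicographically smaller can dominate b on the relevant inputs:
   w ++ b' ++ z would be a smaller index with an s-value at least s(h).
   A finite computation shows that every window around a non-prefix
   occurrence of 1000, from seven bits before it to two bits after (clipped
   at the ends of x), is ruled out in this way, unless it contains 0000 (which
   forces 10000, dominated by 01010), or it contains an earlier non-prefix
   occurrence of 1000 (induction on the position), or x = 1001000. *)

From mathcomp Require Import all_boot zify.
Set Implicit Arguments. Unset Strict Implicit. Unset Printing Implicit Defensive.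

Lemma stern_fuel_enough k1 k2 n :
  n <= k1 -> n <= k2 -> stern_fuel k1 n = stern_fuel k2 n.
Proof.
elim: k1 k2 n => [|k1 IH] [|k2] n; rewrite ?leqn0 => //.
- by move=> /eqP ->.
- by move=> _ /eqP ->.
move=> le_n1 le_n2 /=; case: ifP => // /negbT; rewrite -ltnNge => lt1n.
have lt_half : n./2 < n by rewrite -divn2 ltn_Pdiv //; lia.
case: ifP => odd_n; last by rewrite (IH k2) //; lia.
have lt_halfS : n./2.+1 < n.
  by move: (odd_double_half n); rewrite odd_n -!addnn; lia.
by rewrite (IH k2 n./2) ?(IH k2 n./2.+1) //; lia.
Qed.

Lemma stern_fuelE k n : n <= k -> stern_fuel k n = stern n.
Proof. by move=> le_nk; apply: stern_fuel_enough. Qed.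

Lemma stern_rec n : 1 < n ->
  stern n = if odd n then stern n./2 + stern n./2.+1 else stern n./2.
Proof.
move=> lt1n; rewrite {1}/stern -{1}(prednK (ltnW lt1n)) /= ifF; last first.
  by apply/negbTE; rewrite -ltnNge.
have lt_half : n./2 < n by rewrite -divn2 ltn_Pdiv //; lia.
case: ifP => odd_n; last by rewrite stern_fuelE //; lia.
have lt_halfS : n./2.+1 < n.
  by move: (odd_double_half n); rewrite odd_n -!addnn; lia.
by rewrite !stern_fuelE //; lia.
Qed.

Lemma stern_double n : stern n.*2 = stern n.
Proof. by case: n => // n; rewrite stern_rec ?odd_double ?doubleK //; lia. Qed.

Lemma stern_doubleS n : stern n.*2.+1 = stern n + stern n.+1.
Proof.
case: n => // n.
by rewrite stern_rec /= ?odd_double ?uphalf_double //; lia.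
Qed.

Definition bin_val (s : seq bool) : nat := foldl (fun n (b : bool) => n.*2 + b) 0 s.

Lemma bin_val_rcons s (b : bool) : bin_val (rcons s b) = (bin_val s).*2 + b.
Proof. by rewrite /bin_val foldl_rcons. Qed.

Lemma bin_val_cat s t : bin_val (s ++ t) = bin_val s * 2 ^ size t + bin_val t.
Proof.
elim/last_ind: t => [|t b IH]; first by rewrite cats0 muln1 addn0.
rewrite -rcons_cat !bin_val_rcons IH size_rcons expnS -!muln2.
move: (2 ^ size t) => X; nia.
Qed.

Lemma bin_val_lt s : bin_val s < 2 ^ size s.
Proof.
elim/last_ind: s => [|s b IH] //.
by rewrite bin_val_rcons size_rcons expnS -muln2; case: b => /=; lia.
Qed.

Lemma bin_fuel_spec k n : 0 < n <= k ->
  bin_val (bin_fuel k n) = n /\ head false (bin_fuel k n).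
Proof.
elim: k n => [|k IH] [|n] //= le_nk.
have def_n : odd n.+1 + (uphalf n).*2 = n.+1 := odd_double_half n.+1.
case def_half: (uphalf n) => [|m].
  have -> : n = 0 by move: def_n; rewrite def_half; case: (odd n); lia.
  by case: k {IH le_nk}.
have [val_m head_m] : bin_val (bin_fuel k m.+1) = m.+1 /\ head false (bin_fuel k m.+1).
  by apply: IH; rewrite -def_half; move: def_n le_nk; rewrite -!muln2; lia.
split; first by rewrite bin_val_rcons val_m -def_half addnC.
by case: (bin_fuel k m.+1) head_m.
Qed.

Lemma binrep_spec h : 0 < h -> bin_val (binrep h) = h /\ head false (binrep h).
Proof. by case: h => // h _; apply: bin_fuel_spec; rewrite /= leqnn. Qed.

Lemma binrepK h : bin_val (binrep h) = h.
Proof. by case: h => // h; case: (binrep_spec (ltn0Sn h)). Qed.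

Lemma head_binrep h : 1 < size (binrep h) -> head false (binrep h).
Proof. by case: h => // h _; case: (binrep_spec (ltn0Sn h)). Qed.

Fixpoint lex_lt (a b : seq bool) : bool :=
  match a, b with
  | x :: a', y :: b' => (~~ x && y) || ((x == y) && lex_lt a' b')
  | _, _ => false
  end.

Lemma lex_lt_bin_val a b : size a = size b -> lex_lt a b -> bin_val a < bin_val b.
Proof.
elim: a b => [|x a IH] [|y b] //= [eq_size].
rewrite -[x :: a]cat1s -[y :: b]cat1s !bin_val_cat eq_size.
have := bin_val_lt a; rewrite eq_size => lt_a.
case/orP=> [/andP [/negbTE-> ->]|/andP [/eqP-> /(IH _ eq_size)]] /=.
  by rewrite [bin_val [:: false]]/bin_val [bin_val [:: true]]/bin_val /=; lia.
by move: (2 ^ size b) (bin_val [:: y]) => X Y; nia.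
Qed.

Lemma bin_val_cat_lex_lt p a b q : size a = size b -> lex_lt a b ->
  bin_val (p ++ a ++ q) < bin_val (p ++ b ++ q).
Proof.
move=> eq_size /(lex_lt_bin_val eq_size).
rewrite !bin_val_cat !size_cat eq_size !expnD !mulnA.
have : 0 < 2 ^ size q by rewrite expn_gt0.
move: (2 ^ size q) (2 ^ size b) => X Y; nia.
Qed.

Definition stern_step (b : bool) (p : nat * nat) : nat * nat :=
  if b then (p.1 + p.2, p.2) else (p.1, p.1 + p.2).

Definition stern_walk (s : seq bool) (p : nat * nat) : nat * nat :=
  foldl (fun q b => stern_step b q) p s.

Lemma stern_walk_cat s t p : stern_walk (s ++ t) p = stern_walk t (stern_walk s p).
Proof. by rewrite /stern_walk foldl_cat. Qed.

Lemma stern_walk_bin_val s :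
  stern_walk s (0, 1) = (stern (bin_val s), stern (bin_val s).+1).
Proof.
elim/last_ind: s => [|s b IH] //.
rewrite -cats1 stern_walk_cat IH cats1 bin_val_rcons /=.
case: b; rewrite /= ?addn1 ?addn0 stern_doubleS -?doubleS stern_double //.
Qed.

Lemma stern_walk_linear s u v :
  stern_walk s (u, v) =
    (u * (stern_walk s (1, 0)).1 + v * (stern_walk s (0, 1)).1,
     u * (stern_walk s (1, 0)).2 + v * (stern_walk s (0, 1)).2).
Proof.
elim: s u v => [|b s IH] u v /=; first by rewrite !muln1 !muln0 addn0.
rewrite /stern_walk /= -!/(stern_walk _ _).
by case: b; rewrite ?(IH (u + v)) ?(IH u) (IH 1 1) /= ?addn0 ?add0n; congr pair; nia.
Qed.

Lemma stern_walk_mono s u v u' v' : u <= u' -> v <= v' ->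
  (stern_walk s (u, v)).1 <= (stern_walk s (u', v')).1 /\
  (stern_walk s (u, v)).2 <= (stern_walk s (u', v')).2.
Proof.
elim: s u v u' v' => [|b s IH] u v u' v' le_u le_v //=.
by case: b; apply: IH => //; apply: leq_add.
Qed.

(* [at_end] marks a block ending the string, after which only the second
   component, the value of [s], matters. *)
Definition pair_le (at_end : bool) (p q : nat * nat) : bool :=
  if at_end then p.2 <= q.2 else (p.1 <= q.1) && (p.2 <= q.2).

(* Walks from an arbitrary pair are nonnegative combinations of the walks
   from (1,0) and (0,1); a block at the start is only walked from (0,1). *)
Definition dominates (at_start at_end : bool) (b b' : seq bool) : bool :=
  pair_le at_end (stern_walk b (0, 1)) (stern_walk b' (0, 1)) &&
  (at_start || pair_le at_end (stern_walk b (1, 0)) (stern_walk b' (1, 0))).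

Lemma pair_le_stern_walk at_end b b' p :
  pair_le at_end (stern_walk b (1, 0)) (stern_walk b' (1, 0)) ->
  pair_le at_end (stern_walk b (0, 1)) (stern_walk b' (0, 1)) ->
  pair_le at_end (stern_walk b p) (stern_walk b' p).
Proof.
case: p => u v; rewrite /pair_le (stern_walk_linear b u v) (stern_walk_linear b' u v) /=.
case: at_end => [le1 le2|/andP [le11 le12] /andP [le21 le22]].
  by apply: leq_add; apply: leq_mul.
by apply/andP; split; apply: leq_add; apply: leq_mul.
Qed.

Lemma dominates_stern_walk at_start at_end w b b' z :
  dominates at_start at_end b b' -> (at_start -> w = [::]) -> (at_end -> z = [::]) ->
  (stern_walk (w ++ b ++ z) (0, 1)).2 <= (stern_walk (w ++ b' ++ z) (0, 1)).2.
Proof.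
move=> /andP [le01 le10] w_nil z_nil; rewrite !stern_walk_cat.
have {le01 le10} : pair_le at_end (stern_walk b (stern_walk w (0, 1)))
                                  (stern_walk b' (stern_walk w (0, 1))).
  by case: at_start le10 w_nil => [_ ->|le10 _] //; apply: pair_le_stern_walk.
rewrite /pair_le; case: at_end z_nil => [-> //|_ /andP [le1 le2]].
by case: (stern_walk_mono z le1 le2); rewrite -!surjective_pairing.
Qed.

Lemma record_setter_undominated h w b b' z (at_start at_end : bool) :
  record_setter h -> binrep h = w ++ b ++ z ->
  size b' = size b -> lex_lt b' b -> dominates at_start at_end b b' ->
  (at_start -> w = [::]) -> (at_end -> z = [::]) -> False.
Proof.
move=> rec_h def_h eq_size lt_b' dom w_nil z_nil.
have lt_h : bin_val (w ++ b' ++ z) < h.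
  by rewrite -(binrepK h) def_h; apply: bin_val_cat_lex_lt.
have := rec_h _ lt_h; rewrite /stern_s -[in X in _ < X](binrepK h) def_h.
have := dominates_stern_walk dom w_nil z_nil.
by rewrite !stern_walk_bin_val /= leqNgt => /negbTE ->.
Qed.

Lemma occurs_atP w x i :
  reflect (exists a b, x = a ++ w ++ b /\ size a = i) (occurs_at w x i).
Proof.
apply: (iffP andP) => [[le_size /eqP def_w]|[a [b [-> <-]]]].
  exists (take i x), (drop (i + size w) x); split; last first.
    by rewrite size_take; case: ltnP => //; lia.
  rewrite -{1}(cat_take_drop i x) -{1}(cat_take_drop (size w) (drop i x)).
  by rewrite def_w drop_drop addnC.
by rewrite !size_cat drop_size_cat // take_size_cat //; split; [lia|].
Qed.

Lemma occurs_at_cat w x i a b :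
  occurs_at w x i -> occurs_at w (a ++ x ++ b) (size a + i).
Proof.
case/occurs_atP=> [a' [b' [-> <-]]]; apply/occurs_atP.
by exists (a ++ a'), (b' ++ b); rewrite -!catA size_cat.
Qed.

Definition b1000 := [:: true; false; false; false].
Definition b0000 := [:: false; false; false; false].

Lemma record_setter_no10000 h a b :
  record_setter h -> binrep h <> a ++ [:: true; false; false; false; false] ++ b.
Proof.
move=> rec_h def_h.
apply: (@record_setter_undominated h a _ [:: false; true; false; true; false] b
                                   false false rec_h def_h) => //.
Qed.

Lemma record_setter_no0000 h a b : record_setter h -> binrep h <> a ++ b0000 ++ b.
Proof.
move=> rec_h def_h.
have head_h : head false (binrep h).
  by apply: head_binrep; rewrite def_h !size_cat /=; lia.
elim/last_ind: a b def_h => [|a c IH] b def_h; first by rewrite def_h in head_h.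
case: c def_h => def_h; last by apply: (IH (false :: b)); rewrite def_h cat_rcons.
by apply: (@record_setter_no10000 h a b rec_h); rewrite def_h cat_rcons.
Qed.

Fixpoint bitseqs (n : nat) : seq (seq bool) :=
  if n is k.+1 then [seq x :: s | x <- [:: false; true], s <- bitseqs k] else [:: [::]].

Lemma mem_bitseqs s : s \in bitseqs (size s).
Proof.
elim: s => [|x s IH] //=.
have cons_inj (b : bool) : injective (cons b) by move=> ? ? [].
by rewrite !mem_cat; case: x; rewrite (mem_map (cons_inj _)) IH ?orbT.
Qed.

Fixpoint decr_rev (s : seq bool) : seq bool :=
  match s with
  | [::] => [::]
  | true :: s' => false :: s'
  | false :: s' => true :: decr_rev s'
  end.

(* Binary decrement, wrapping around at zero. *)
Definition bits_pred (s : seq bool) : seq bool := rev (decr_rev (rev s)).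

(* Only the 32 strings just below [b] are tried as replacements; this is
   enough for every window checked in [all_windows_ok]. *)
Definition improvable (at_start at_end : bool) (b : seq bool) : bool :=
  has (fun b' => [&& size b' == size b, lex_lt b' b & dominates at_start at_end b b'])
      (traject bits_pred (bits_pred b) 32).

Definition window_ok (at_start at_end : bool) (c d : seq bool) : bool :=
  let win := c ++ b1000 ++ d in
  [|| has (occurs_at b0000 win) (iota 0 (size win)),
      has (fun i => (at_start ==> (0 < i)) && occurs_at b1000 win i) (iota 0 (size c)),
      [&& at_start, at_end, c == [:: true; false; false] & d == [::]]
    | improvable at_start at_end win].

(* A window [c ++ b1000 ++ d]: [at_start] means that [c] is a whole
   (nonempty) prefix of the string, otherwise [c] is the seven bits before
   the occurrence; likewise [d] is the whole suffix or the next two bits. *)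
Definition left_contexts (at_start : bool) : seq (seq bool) :=
  if at_start then [seq c <- flatten [seq bitseqs k | k <- iota 1 7] | head false c]
  else bitseqs 7.

Definition right_contexts (at_end : bool) : seq (seq bool) :=
  if at_end then bitseqs 0 ++ bitseqs 1 else bitseqs 2.

Lemma all_windows_ok :
  all (fun e : bool * bool =>
         all (fun c => all (window_ok e.1 e.2 c) (right_contexts e.2)) (left_contexts e.1))
      [:: (false, false); (false, true); (true, false); (true, true)].
Proof. by vm_compute. Qed.

Lemma window_okP at_start at_end c d :
  c \in left_contexts at_start -> d \in right_contexts at_end ->
  window_ok at_start at_end c d.
Proof.
move=> c_in d_in; have /allP/(_ (at_start, at_end)) := all_windows_ok.
by case: at_start at_end c_in d_in => [] [] c_in d_in /(_ isT)/allP/(_ c c_in)/allP; apply.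
Qed.

Lemma left_context_split y : head false y ->
  exists w c (at_start : bool), [/\ y = w ++ c, at_start -> w = [::],
    ~~ at_start -> 0 < size w & c \in left_contexts at_start].
Proof.
move=> head_y; case: (leqP (size y) 7) => size_y.
  exists [::], y, true; split=> //; rewrite mem_filter head_y andTb.
  apply/flatten_mapP; exists (size y); last exact: mem_bitseqs.
  by rewrite mem_iota; case: y head_y size_y => //= *; lia.
exists (take (size y - 7) y), (drop (size y - 7) y), false.
split=> //; first by rewrite cat_take_drop.
  by rewrite size_takel; lia.
have size_drop7 : size (drop (size y - 7) y) = 7 by rewrite size_drop; lia.
by have := mem_bitseqs (drop (size y - 7) y); rewrite size_drop7.
Qed.

Lemma right_context_split z :
  exists d z' (at_end : bool),
    [/\ z = d ++ z', at_end -> z' = [::] & d \in right_contexts at_end].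
Proof.
case: (leqP (size z) 1) => size_z.
  exists z, [::], true; split=> //; first by rewrite cats0.
  by case: z size_z => [|[] []].
exists (take 2 z), (drop 2 z), false; split=> //; first by rewrite cat_take_drop.
by have := mem_bitseqs (take 2 z); rewrite size_takel // ltnW.
Qed.

Definition b1001000 := [:: true; false; false; true; false; false; false].

Lemma window_ok_sound h w c d z (at_start at_end : bool) :
  record_setter h -> binrep h = w ++ (c ++ b1000 ++ d) ++ z ->
  (at_start -> w = [::]) -> (~~ at_start -> 0 < size w) -> (at_end -> z = [::]) ->
  window_ok at_start at_end c d ->
  binrep h = b1001000 \/
  exists2 j, 0 < j < size w + size c & occurs_at b1000 (binrep h) j.
Proof.
move=> rec_h def_h w_nil w_pos z_nil.
case/or4P=> [/hasP [i _ occ0]|/hasP [i lt_i /andP [pos_i occ1]]|exc|improv].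
- have /occurs_atP [a [b [def_h' _]]] := occurs_at_cat w z occ0.
  by case: (record_setter_no0000 (a := a) (b := b) rec_h); rewrite def_h def_h'.
- right; exists (size w + i); last by rewrite def_h occurs_at_cat.
  rewrite mem_iota in lt_i; rewrite ltn_add2l (andP lt_i).2 andbT.
  case: at_start w_nil w_pos pos_i => [w_nil _ pos_i|_ w_pos _].
    by rewrite w_nil.
  by rewrite addn_gt0 w_pos.
- case/and4P: exc => /w_nil w0 /z_nil z0 /eqP c0 /eqP d0.
  by left; rewrite def_h w0 z0 c0 d0.
- case/hasP: improv => b' _ /and3P [/eqP eq_size lt_b' dom].
  by case: (record_setter_undominated rec_h def_h eq_size lt_b' dom w_nil z_nil).
Qed.

Lemma record_setter_occurs_1000 h i : record_setter h -> 0 < i ->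
  occurs_at b1000 (binrep h) i -> binrep h = b1001000.
Proof.
move=> rec_h; elim/ltn_ind: i => i IH pos_i /occurs_atP [y [z [def_h size_y]]].
have head_y : head false y.
  have : head false (binrep h) by apply: head_binrep; rewrite def_h !size_cat /=; lia.
  by rewrite def_h; move: pos_i; rewrite -size_y; case: y {def_h size_y}.
have [w [c [at_start [def_y w_nil w_pos c_in]]]] := left_context_split head_y.
have [d [z' [at_end [def_z z_nil d_in]]]] := right_context_split z.
have def_h' : binrep h = w ++ (c ++ b1000 ++ d) ++ z'.
  by rewrite def_h def_y def_z -!catA.
have := window_ok_sound rec_h def_h' w_nil w_pos z_nil (window_okP c_in d_in).
case=> // [[j]].
by case/andP=> pos_j lt_j; apply: IH; rewrite // -size_y def_y size_cat.
Qed.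

Theorem mainTheorem8 (h : nat) :
  record_setter h ->
  binrep h <> [:: true; false; false; true; false; false; false] ->
  forall i : nat, occurs_at [:: true; false; false; false] (binrep h) i -> i = 0.
Proof.
move=> rec_h not_exc [|i] // occ.
by case: not_exc; apply: (record_setter_occurs_1000 rec_h _ occ).
Qed.
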